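(* Let $k>4$ be an even integer. Assume that when the procedure $\mathrm{Permutations}$ is run on the list $(0,1,2,\dots,k-1)$ (i.e. $\mathrm{Permutations}(L,0,\mathrm{Func})$ with $L=(0,1,\dots,k-1)$), the last permutation it produces is $(1,4,3,5,6,7,8,\dots,k-1,2,0)$ (and, correspondingly, for any list of $k$ pairwise distinct elements $(x_0,\dots,x_{k-1})$ the last permutation produced is $(x_1,x_4,x_3,x_5,x_6,\dots,x_{k-1},x_2,x_0)$). Then, when $\mathrm{Permutations}$ is run on the list $(0,1,2,\dots,k)$ of $k+1$ elements, each of the $k+1$ elements is inserted exactly once at the beginning of the list (i.e. the $k+1$ recursive calls $\mathrm{Permutations}(L,1,\mathrm{Func})$ made by the top-level invocation are made with pairwise distinct elements at position $0$), and the last permutation produced is $(1,0,2,3,4,\dots,k)$, the initial sequence with its first two elements swapped.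
   Context: Lists are 0-indexed. For a list $L$, $\mathrm{extract}(L,j)$ removes the element at position $j$ from $L$ and returns it; $\mathrm{Insert}(L,i,x)$ inserts $x$ into $L$ so that it occupies position $i$, shifting the elements previously at positions $\ge i$ one step to the right. Each combined operation $\mathrm{Insert}(L,i,\mathrm{extract}(L,j))$ first extracts, then inserts, so the length of $L$ is unchanged. The recursive procedure $\mathrm{Permutations}(L,i,\mathrm{Func})$ (with $\mathrm{Func}$ a callback) is: let $n=\mathrm{length}(L)$. If $i\ge n-1$, call $\mathrm{Func}(L)$. Otherwise: (1) call $\mathrm{Permutations}(L,i+1,\mathrm{Func})$; (2) do $\mathrm{Insert}(L,i,\mathrm{extract}(L,i+1))$ and call $\mathrm{Permutations}(L,i+1,\mathrm{Func})$; (3) repeat $\max(n-i-3,0)$ times: if $n-i$ is even, do $\mathrm{Insert}(L,i,\mathrm{extract}(L,n-1))$, otherwise do $\mathrm{Insert}(L,i,\mathrm{extract}(L,i+1))$; then call $\mathrm{Permutations}(L,i+1,\mathrm{Func})$; (4) if $n-i>2$: do $\mathrm{Insert}(L,i,\mathrm{extract}(L,i+1))$ and call $\mathrm{Permutations}(L,i+1,\mathrm{Func})$. The main call is $\mathrm{Permutations}(L,0,\mathrm{Func})$; each list passed to $\mathrm{Func}$ is a ''produced permutation''. A call $\mathrm{Permutations}(L,i,\mathrm{Func})$ modifies only positions $\ge i$, and its effect on that suffix depends only on the suffix length $n-i$ (so the assumed behaviour on $(0,\dots,k-1)$ determines a fixed rearrangement applied to any suffix of length $k$). The ''last permutation produced''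 when run on a list is the state of the list when the main call returns (which equals the argument of the last call to $\mathrm{Func}$). *)

From mathcomp Require Import all_boot.
Set Implicit Arguments. Unset Strict Implicit. Unset Printing Implicit Defensive.

(* mv L i j = Insert(L, i, extract(L, j)) : extract the element at position j,
   then insert it so that it occupies position i (0-indexed).
   (If j is out of range, L is returned unchanged; this never happens below.) *)
Definition mv (T : Type) (L : seq T) (i j : nat) : seq T :=
  match drop j L with
  | x :: rest => let L' := take j L ++ rest in take i L' ++ x :: drop i L'
  | [::] => L
  end.

(* perm_aux m i L runs Permutations(L, i, Func) where m = n - i, n = size L.
   It returns (final state of L when the call returns,
               list of the states of L at each immediate recursive call
               Permutations(L, i+1, Func), in order). *)
Fixpoint perm_aux (T : Type) (m i : nat) (L : seq T) {struct m}
  : seq T * seq (seq T) :=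
  match m with
  | 0 => (L, [::])
  | m'.+1 =>
    if m' == 0 then (L, [::]) else
    let n := size L in
    let call := fun L0 : seq T => (perm_aux m' i.+1 L0).1 in
    let s1 := L in
    let L1 := call s1 in
    let s2 := mv L1 i i.+1 in
    let L2 := call s2 in
    let j := if ~~ odd m then n.-1 else i.+1 in
    let p3 := iter (m - 3)
                (fun p : seq T * seq (seq T) =>
                   let s := mv p.1 i j in (call s, rcons p.2 s))
                (L2, [:: s1; s2]) in
    if 2 < m then
      let s4 := mv p3.1 i i.+1 in (call s4, rcons p3.2 s4)
    else p3
  end.

Definition Permutations (T : Type) (L : seq T) : seq T * seq (seq T) :=
  perm_aux (size L) 0 L.

(* The last permutation produced = state of the list when the main call returns. *)
Definition last_perm (T : Type) (L : seq T) : seq T := (Permutations L).1.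

Definition top_calls (T : Type) (L : seq T) : seq (seq T) := (Permutations L).2.

From mathcomp Require Import all_boot zify.

(* For a list of odd length k + 1, the element inserted at the front by the
   top-level call is always the one at position 1, so every round of that call
   swaps the first two entries and then runs Permutations(L, 1).  Writing the
   input as the swap of c = (1, 0, 2, ..., k), the lists seen at the k + 1
   top-level recursive calls are the swaps of c, R c, ..., R^k c, and the last
   permutation is R^(k+1) c, where R c = c_1 :: f (c_0 :: c_2 :: ... :: c_k) and
   f is the assumed last permutation on k elements.  R permutes positions by a
   map rho that is a single (k + 1)-cycle
     0 -> 1 -> 2 -> 5 -> 7 -> ... -> k-1 -> 3 -> 4 -> 6 -> ... -> k -> 0,
   so R^(k+1) c = c, and the heads c_(rho^i 1), i <= k, are pairwise distinct. *)

(* Simplifying [perm_aux m.+3] unfolds every recursive call, exponentially. *)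
Arguments perm_aux : simpl never.

Lemma iter_trace {A : Type} (g h : A -> A) n x s :
  iter n (fun p => (g (h p.1), rcons p.2 (h p.1))) (x, s) =
  (iter n (g \o h) x, s ++ [seq h (iter t (g \o h) x) | t <- iota 0 n]).
Proof.
elim: n => [|n IHn]; first by rewrite cats0.
by rewrite iterS IHn -[n.+1]addn1 iotaD map_cat catA /= cats1 addn1.
Qed.

Lemma iter_morph_in {A B : Type} (S : {pred A}) (h : A -> B) (f : A -> A) (g : B -> B) :
    {homo f : a / a \in S} -> {in S, forall a, g (h a) = h (f a)} ->
  forall n, {in S, forall a, iter n g (h a) = h (iter n f a)}.
Proof.
move=> fS fgh; elim=> [|n IHn] a aS //.
by rewrite iterS IHn // fgh // iter_in.
Qed.

Lemma mkseq_iter {A : Type} (f : A -> A) x n : mkseq (fun t => iter t f x) n = traject f x n.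
Proof.
apply: (@eq_from_nth _ x) => [|i]; first by rewrite size_mkseq size_traject.
by rewrite size_mkseq => lt_i_n; rewrite nth_mkseq // nth_traject.
Qed.

Lemma traject_rot1 {A : Type} (f : A -> A) x n :
  iter n f x = x -> traject f (f x) n = rot 1 (traject f x n).
Proof.
case: n => [|n] // fnx.
by rewrite [in RHS]trajectS rot1_cons trajectSr -iterSr fnx.
Qed.

Lemma iter_traject_period {T : eqType} {f : T -> T} {x n y} :
  iter n f x = x -> y \in traject f x n -> iter n f y = y.
Proof. by move=> fnx /trajectP[i _ ->]; rewrite -iterD addnC iterD fnx. Qed.

Section Procedure.

Context {T : Type}.
Implicit Types (x : T) (L : seq T).

Lemma size_mv L i j : size (mv L i j) = size L.
Proof.
rewrite /mv; case E: (drop j L) => [|y rest] //.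
rewrite size_cat /= addnS -size_cat cat_take_drop size_cat /=.
by rewrite -[in RHS](cat_take_drop j L) E size_cat /= addnS.
Qed.

Lemma mv_cons x L i j : mv (x :: L) i.+1 j.+1 = x :: mv L i j.
Proof. by rewrite /mv /=; case: (drop j L). Qed.

Lemma mv_cons_last x L i : mv (x :: L) i.+1 (size L) = x :: mv L i (size L).-1.
Proof. by case: L => [|y L] //; rewrite mv_cons. Qed.

Lemma head_mv01 x0 L : 1 < size L -> head x0 (mv L 0 1) = nth x0 L 1.
Proof. by case: L => [|x [|y L]]. Qed.

Lemma mv01K : involutive (fun L => mv L 0 1).
Proof. by case=> [|x [|y L]]. Qed.

Lemma perm_auxS m i L : perm_aux m.+1 i L =
    if m == 0 then (L, [::]) else
    let call L0 := (perm_aux m i.+1 L0).1 in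
    let j := if ~~ odd m.+1 then (size L).-1 else i.+1 in
    let p3 := iter (m.+1 - 3)
                (fun p => let s := mv p.1 i j in (call s, rcons p.2 s))
                (call (mv (call L) i i.+1), [:: L; mv (call L) i i.+1]) in
    if 2 < m.+1 then let s4 := mv p3.1 i i.+1 in (call s4, rcons p3.2 s4)
    else p3.
Proof. by []. Qed.

Lemma perm_aux_unfold m i L :
  let call L0 := (perm_aux m.+2 i.+1 L0).1 in
  let j := if odd m then (size L).-1 else i.+1 in
  let g L0 := call (mv L0 i j) in
  let L2 := call (mv (call L) i i.+1) in
  perm_aux m.+3 i L =
  (call (mv (iter m g L2) i i.+1),
   rcons [:: L, mv (call L) i i.+1 & [seq mv (iter t g L2) i j | t <- iota 0 m]]
         (mv (iter m g L2) i i.+1)).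
Proof.
move=> call j g L2.
rewrite perm_auxS -/call !subSS subn0.
have -> : ~~ odd m.+3 = odd m by rewrite /= !negbK.
cbv zeta; rewrite -/j -/L2 (iter_trace call (fun L0 => mv L0 i j)).
reflexivity.
Qed.

Lemma size_perm_aux m i L : size (perm_aux m i L).1 = size L.
Proof.
elim: m i L => [|[|[|m]] IHm] i L //; first exact: size_mv.
rewrite perm_aux_unfold /= IHm size_mv; apply/eqP.
apply: (iter_in (S := [pred L0 : seq T | size L0 == size L])) => [L0|];
  by rewrite !inE /= IHm size_mv // IHm.
Qed.

Lemma perm_aux_cons m i x L : (perm_aux m i.+1 (x :: L)).1 = x :: (perm_aux m i L).1.
Proof.
elim: m i x L => [|[|[|m]] IHm] i x L //; first exact: mv_cons.
rewrite !perm_aux_unfold /= [(perm_aux _ _ (x :: L)).1]IHm mv_cons IHm.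
rewrite (@iter_morph_in _ _ [pred L0 | size L0 == size L] (cons x)
  (fun L0 => (perm_aux m.+2 i.+1 (mv L0 i (if odd m then (size L).-1 else i.+1))).1)).
- by rewrite mv_cons IHm.
- by move=> L0; rewrite !inE size_perm_aux size_mv.
- move=> L0; rewrite inE => /eqP <-.
  by case: (odd m); rewrite ?mv_cons_last ?mv_cons IHm.
- by rewrite inE /= size_perm_aux size_mv size_perm_aux.
Qed.

Definition swap_round n L := (perm_aux n 1 (mv L 0 1)).1.

Lemma Permutations_odd L : odd (size L) -> 1 < size L ->
  Permutations L =
  (iter (size L) (swap_round (size L).-1) (mv L 0 1),
   map (fun L0 => mv L0 0 1) (traject (swap_round (size L).-1) (mv L 0 1) (size L))).
Proof.
rewrite /Permutations; case sizeL: (size L) => [|[|[|m]]] //= /negPn/negbTE odd_m _.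
rewrite perm_aux_unfold odd_m.
have callE : (perm_aux m.+2 1 L).1 = swap_round m.+2 (mv L 0 1) by rewrite /swap_round mv01K.
rewrite callE; set c := mv L 0 1.
change (fun L0 => (perm_aux m.+2 1 (mv L0 0 1)).1) with (swap_round m.+2).
change (perm_aux m.+2 1 (mv ?X 0 1)).1 with (swap_round m.+2 X).
congr (_, _); first by rewrite -!iterSr !iterS.
rewrite !rcons_cons /c mv01K -/c; congr [:: _, _ & _].
set L2 := swap_round m.+2 (swap_round m.+2 c).
change (mv L2 0 1 :: _) with
  (map (fun L0 => mv L0 0 1) (L2 :: traject (swap_round m.+2) (swap_round m.+2 L2) m)).
by rewrite -trajectS -mkseq_iter mkseqS map_rcons -map_comp.
Qed.

End Procedure.

Definition assumed_last_perm (xs : seq nat) : seq nat :=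
  [:: nth 0 xs 1, nth 0 xs 4, nth 0 xs 3 & drop 5 xs ++ [:: nth 0 xs 2; nth 0 xs 0]].

Definition assumed_round (c : seq nat) : seq nat :=
  if c is x0 :: x1 :: t then x1 :: assumed_last_perm (x0 :: t) else c.

Definition round_index k p :=
  if p == 0 then 1 else if p == 1 then 2 else if p == 2 then 5 else if p == 3 then 4
  else if p <= k - 2 then p + 2 else if p == k - 1 then 3 else 0.

Ltac case_ifs := repeat match goal with
  | |- context [if ?b then _ else _] => case: (boolP b) => ?
  end.

Lemma perm_assumed_last_perm xs : 4 < size xs -> perm_eq (assumed_last_perm xs) xs.
Proof.
case: xs => [|x0 [|x1 [|x2 [|x3 [|x4 t]]]]] //= _.
by apply/permP => q /=; rewrite drop0 count_cat /=; lia.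
Qed.

Lemma perm_assumed_round c : 5 < size c -> perm_eq (assumed_round c) c.
Proof.
case: c => [|x0 [|x1 t]] //= size_t.
have /permP count_assumed : perm_eq (assumed_last_perm (x0 :: t)) (x0 :: t).
  by apply: perm_assumed_last_perm => /=; lia.
by apply/permP => q; move: (count_assumed q) => /=; lia.
Qed.

Lemma size_iter_assumed_round n c : 5 < size c -> size (iter n assumed_round c) = size c.
Proof.
move=> size_c; elim: n => //= n IHn.
by rewrite (perm_size (perm_assumed_round _ _)) IHn.
Qed.

Section ModelRound.

Variable k : nat.
Hypothesis k_gt4 : 4 < k.

Lemma round_index_le p : p <= k -> round_index k p <= k.
Proof. by rewrite /round_index => *; case_ifs; lia. Qed.

Lemma nth_assumed_round c p : size c = k.+1 -> p <= k ->
  nth 0 (assumed_round c) p = nth 0 c (round_index k p).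
Proof.
case: c => [|x0 [|x1 [|x2 [|x3 [|x4 [|x5 t]]]]]] //= [size_t]; try lia.
case: p => [|[|[|[|q]]]] // le_qk; rewrite /= drop0 nth_cat.
case: (ltnP q (size t)) => [lt_qt|le_tq].
  by have -> : round_index k q.+4 = q.+3.+3 by rewrite /round_index; case_ifs; lia.
have [->|->] : q = size t \/ q = (size t).+1 by lia.
  have -> : round_index k (size t).+4 = 3 by rewrite /round_index; case_ifs; lia.
  by rewrite subnn.
have -> : round_index k (size t).+1.+4 = 0 by rewrite /round_index; case_ifs; lia.
by rewrite subSnn.
Qed.

Lemma nth_iter_assumed_round c n p : size c = k.+1 -> p <= k ->
  nth 0 (iter n assumed_round c) p = nth 0 c (iter n (round_index k) p).
Proof.
move=> size_c; elim: n p => [|n IHn] p le_pk //.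
have size_iter : size (iter n assumed_round c) = k.+1.
  by rewrite size_iter_assumed_round size_c.
by rewrite [in LHS]iterS nth_assumed_round // IHn ?round_index_le // iterSr.
Qed.

Hypothesis last_permE :
  forall xs, size xs = k -> uniq xs -> last_perm xs = assumed_last_perm xs.

Lemma swap_round_assumed c : size c = k.+1 -> uniq c -> swap_round k c = assumed_round c.
Proof.
case: c => [|x0 [|x1 t]] // [size_t]; first by rewrite -size_t.
rewrite /swap_round [mv _ 0 1]/= perm_aux_cons -size_t /= => /andP[].
rewrite inE negb_or => /andP[_ x0_notin_t] /andP[_ uniq_t].
by rewrite -[(perm_aux _ _ _).1]/(last_perm (x0 :: t)) last_permE //= x0_notin_t.
Qed.

Lemma iter_swap_round_assumed c n : size c = k.+1 -> uniq c ->
  iter n (swap_round k) c = iter n assumed_round c.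
Proof.
move=> size_c uniq_c.
apply: (iter_morph_in [pred d | uniq d && (size d == k.+1)] id)
  => [d /andP[uniq_d /eqP size_d] | d /andP[uniq_d /eqP size_d] |].
- have perm_d : perm_eq (assumed_round d) d by apply: perm_assumed_round; rewrite size_d.
  by rewrite inE (perm_uniq perm_d) (perm_size perm_d) uniq_d size_d eqxx.
- exact: swap_round_assumed.
- by rewrite inE uniq_c size_c eqxx.
Qed.

End ModelRound.

(* [round_orbit r t] is [iter t (round_index (2 * r)) 0]: the orbit of 0 is
   0, 1, 2, 5, 7, ..., 2r-1, 3, 4, 6, ..., 2r. *)
Definition round_orbit r t :=
  if t <= 2 then t else if t <= r then 2 * t - 1 else if t == r.+1 then 3 else 2 * (t - r).

Section RoundCycle.

Variable r : nat.
Hypothesis r_gt2 : 2 < r.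

Local Notation rho := (round_index (2 * r)).

Lemma iter_round_index0 t : t <= 2 * r -> iter t rho 0 = round_orbit r t.
Proof.
elim: t => [|t IHt] // lt_t; rewrite iterS IHt; last exact: ltnW.
by rewrite /round_orbit; case_ifs; rewrite /round_index; case_ifs; lia.
Qed.

Lemma iter_round_index_period : iter (2 * r).+1 rho 0 = 0.
Proof.
rewrite iterS iter_round_index0 //.
by rewrite /round_orbit; case_ifs; rewrite /round_index; case_ifs; lia.
Qed.

Lemma mem_traject_round_index0 : traject rho 0 (2 * r).+1 =i iota 0 (2 * r).+1.
Proof.
move=> p; rewrite mem_iota add0n; apply/trajectP/idP => [[t lt_t ->]|lt_p].
  by rewrite iter_round_index0 // /round_orbit; case_ifs; lia.
(* the inverse of [round_orbit r] *)
exists (if p <= 2 then p else if p == 3 then r.+1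
        else if p %% 2 == 1 then p.+1 %/ 2 else p %/ 2 + r);
  first by case_ifs; lia.
by rewrite iter_round_index0; case_ifs; rewrite /round_orbit; case_ifs; lia.
Qed.

Lemma perm_traject_round_index1 : perm_eq (traject rho 1 (2 * r).+1) (iota 0 (2 * r).+1).
Proof.
have uniq0 : uniq (traject rho 0 (2 * r).+1).
  rewrite (uniq_size_uniq (iota_uniq 0 (2 * r).+1)) ?size_traject ?size_iota //.
  by move=> p; rewrite mem_traject_round_index0.
have -> : traject rho 1 (2 * r).+1 = traject rho (rho 0) (2 * r).+1 by [].
rewrite traject_rot1 ?iter_round_index_period // perm_rot.
by apply: uniq_perm => //; [exact: iota_uniq | exact: mem_traject_round_index0].
Qed.

Lemma round_index_cycle p : p <= 2 * r -> iter (2 * r).+1 rho p = p.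
Proof.
move=> le_p; apply: (iter_traject_period iter_round_index_period).
by rewrite mem_traject_round_index0 mem_iota.
Qed.

Lemma iter_assumed_round_cycle c : size c = (2 * r).+1 -> iter (2 * r).+1 assumed_round c = c.
Proof.
move=> size_c; apply: (@eq_from_nth _ 0) => [|p].
  by rewrite size_iter_assumed_round // size_c; lia.
rewrite size_iter_assumed_round ?size_c => [lt_p|]; last lia.
by rewrite (nth_iter_assumed_round (2 * r)) ?round_index_cycle //; lia.
Qed.

Lemma uniq_heads_assumed_round c : size c = (2 * r).+1 -> uniq c ->
  uniq [seq head 0 (mv d 0 1) | d <- traject assumed_round c (2 * r).+1].
Proof.
move=> size_c uniq_c.
have -> : [seq head 0 (mv d 0 1) | d <- traject assumed_round c (2 * r).+1] =
          map (nth 0 c) (traject rho 1 (2 * r).+1).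
  rewrite -!mkseq_iter -!map_comp; apply/eq_in_map => t; rewrite mem_iota /= => lt_t.
  have size_t : size (iter t assumed_round c) = (2 * r).+1.
    by rewrite size_iter_assumed_round size_c //; lia.
  rewrite head_mv01 ?size_t; last lia.
  by rewrite (nth_iter_assumed_round (2 * r)) //; lia.
rewrite (perm_uniq (perm_map _ perm_traject_round_index1)) -size_c.
by rewrite -[map _ _]/(mkseq (nth 0 c) (size c)) mkseq_nth.
Qed.

End RoundCycle.

Theorem lemma2 (k : nat) :
  4 < k -> ~~ odd k ->
  last_perm (iota 0 k) = [:: 1, 4, 3 & iota 5 (k - 5) ++ [:: 2; 0]] ->
  (forall xs : seq nat, size xs = k -> uniq xs ->
     last_perm xs =
       [:: nth 0 xs 1, nth 0 xs 4, nth 0 xs 3 & drop 5 xs ++ [:: nth 0 xs 2; nth 0 xs 0]]) ->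
  size (top_calls (iota 0 k.+1)) = k.+1 /\
  uniq [seq head 0 s | s <- top_calls (iota 0 k.+1)] /\
  last_perm (iota 0 k.+1) = [:: 1, 0 & iota 2 (k - 1)].
Proof.
(* The third hypothesis is the instance [xs = iota 0 k] of the fourth. *)
move=> k_gt4 k_even _ last_permE.
have [r k_eq] : exists r, k = 2 * r.
  by exists k./2; rewrite mul2n -[LHS]odd_double_half (negbTE k_even).
subst k; have r_gt2 : 2 < r by lia.
set c := [:: 1, 0 & iota 2 (2 * r - 1)].
have size_c : size c = (2 * r).+1 by rewrite /= size_iota; lia.
have uniq_c : uniq c by rewrite /= !inE !mem_iota iota_uniq; lia.
have iotaE : mv (iota 0 (2 * r).+1) 0 1 = c.
  by rewrite (_ : (2 * r).+1 = (2 * r - 1).+2) //; lia.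
rewrite /top_calls /last_perm Permutations_odd ?size_iota ?succnK ?iotaE; last 2 first.
- by rewrite /= k_even.
- lia.
have trajE : traject (swap_round (2 * r)) c (2 * r).+1 = traject assumed_round c (2 * r).+1.
  by rewrite -!mkseq_iter; apply: eq_mkseq => t; apply: iter_swap_round_assumed.
rewrite trajE iter_swap_round_assumed //; split; [|split].
- by rewrite size_map size_traject.
- by rewrite -map_comp; apply: uniq_heads_assumed_round.
- exact: iter_assumed_round_cycle.
Qed.
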